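(* Let $H=\operatorname{diag}(\lambda_1,\dots,\lambda_n)$ with $\lambda_1\ge\dots\ge\lambda_{n-p}\ge0>\lambda_{n-p+1}\ge\dots\ge\lambda_n$ for some $1\le p<n$, let $L=\max(\lambda_1,-\lambda_n)$ and $0<\alpha<1/L$. Let $(\gamma_k)_{k\ge1}$, $(\beta_k)_{k\ge1}$ be nondecreasing sequences in $[0,1]$ with $\gamma_k=\beta_k$ for all $k$ and $\lim_{k\to\infty}\gamma_k=\lim_{k\to\infty}\beta_k=1$. For $i$ with $\lambda_i<0$ define $b_{i,0}=0$ and, for $k\ge1$, \[ b_{i,k}=(\beta_k+\gamma_k\alpha|\lambda_i|)\Big(1-\frac{1}{1+b_{i,k-1}}\Big)+\alpha|\lambda_i|. \] Then for all $i$ with $\lambda_i<0$, \[ \lim_{k\to\infty}b_{i,k}=\alpha|\lambda_i|+\sqrt{\alpha|\lambda_i|}\sqrt{1+\alpha|\lambda_i|}. \]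
   Context: The quantities $b_{i,k}$ describe the per-iteration growth factors $x_i^{k+1}=x_i^0\prod_{m=0}^k(1+b_{i,m})$ of the components along negative-curvature directions for the accelerated gradient iteration $y^k=x^k+\gamma_k(x^k-x^{k-1})$, $x^{k+1}=x^k+\beta_k(x^k-x^{k-1})-\alpha Hy^k$, $x^0=x^1$, applied to $f(x)=\frac12x^THx$. *)

From HB Require Import structures.
From mathcomp Require Import all_boot all_order all_algebra.
From mathcomp Require Import all_classical all_reals all_analysis.
Set Implicit Arguments. Unset Strict Implicit. Unset Printing Implicit Defensive.
Import Order.TTheory GRing.Theory Num.Theory.
Local Open Scope ring_scope.

Fixpoint bgrowth (R : realType) (alpha li : R) (beta gamma : nat -> R) (k : nat) : R :=
  match k with
  | 0%N => 0
  | k'.+1 => (beta k + gamma k * (alpha * `|li|)) *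
             (1 - 1 / (1 + bgrowth alpha li beta gamma k')) + alpha * `|li|
  end.

(* For k >= 1 the recursion reads b_k = T_{beta_k}(b_{k-1}) with
   T_c(x) = c (1 + a) x / (1 + x) + a and a = alpha |lam_i| > 0.  The limit map
   T_1 fixes s = a + sqrt a sqrt (1 + a), since (s - a)^2 = a (1 + a), and on
   [a, +oo) it is a contraction of ratio 1 / (1 + a); replacing T_1 by T_c costs
   at most (1 - c)(1 + a).  Hence
   |b_{k+1} - s| <= |b_k - s| / (1 + a) + (1 - beta_{k+1})(1 + a),
   and the perturbation vanishes as beta_k -> 1. *)

From HB Require Import structures.
From mathcomp Require Import all_boot all_order all_algebra.
From mathcomp Require Import all_classical all_reals all_analysis.
From mathcomp Require Import ring lra.
Set Implicit Arguments. Unset Strict Implicit. Unset Printing Implicit Defensive.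
Import Order.TTheory GRing.Theory Num.Theory.
Import numFieldNormedType.Exports.
Local Open Scope classical_set_scope.
Local Open Scope ring_scope.

Definition growth_step (R : fieldType) (a c x : R) : R :=
  (c + c * a) * (1 - 1 / (1 + x)) + a.

Definition growth_fixpoint (R : rcfType) (a : R) : R :=
  a + Num.sqrt a * Num.sqrt (1 + a).

Lemma growth_step_ge (R : realFieldType) (a c x : R) :
  0 <= a -> 0 <= c -> 0 <= x -> a <= growth_step a c x.
Proof.
move=> a0 c0 x0; rewrite /growth_step lerDr; apply: mulr_ge0.
  by rewrite addr_ge0 ?mulr_ge0.
by rewrite subr_ge0 ler_pdivrMr ?mul1r; lra.
Qed.

Lemma growth_fixpoint_ge (R : rcfType) (a : R) : a <= growth_fixpoint a.
Proof. by rewrite /growth_fixpoint lerDl mulr_ge0 ?sqrtr_ge0. Qed.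

Lemma growth_fixpointP (R : rcfType) (a : R) :
  0 <= a -> growth_step a 1 (growth_fixpoint a) = growth_fixpoint a.
Proof.
move=> a0; have s_ge := growth_fixpoint_ge a.
rewrite /growth_step mul1r; set s := growth_fixpoint a in s_ge *.
have r2 : (s - a) ^+ 2 = a * (1 + a).
  by rewrite /s addrC addKr exprMn !sqr_sqrtr //; lra.
have -> : (1 + a) * (1 - 1 / (1 + s)) + a = s + (a * (1 + a) - (s - a) ^+ 2) / (1 + s).
  by field; apply: lt0r_neq0; lra.
by rewrite r2 subrr mul0r addr0.
Qed.

Lemma growth_step_dist_le (R : realFieldType) (a c x s : R) :
  0 <= a -> 0 <= c <= 1 -> a <= x -> a <= s -> growth_step a 1 s = s ->
  `|growth_step a c x - s| <= (1 - c) * (1 + a) + `|x - s| / (1 + a).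
Proof.
move=> a0 /andP[c0 c1] ax as_ fix_s.
have x1 : 0 < 1 + x by lra.
have s1 : 0 < 1 + s by lra.
have a1 : 0 < 1 + a by lra.
have -> : growth_step a c x - s =
    (c - 1) * (1 + a) * (x / (1 + x)) + (1 + a) / ((1 + x) * (1 + s)) * (x - s).
  by rewrite -{1}fix_s /growth_step; field; rewrite ?lt0r_neq0.
apply: le_trans (ler_normD _ _) _; apply: lerD.
  have t0 : 0 <= x / (1 + x) by rewrite divr_ge0 //; lra.
  have t1 : x / (1 + x) <= 1 by rewrite ler_pdivrMr ?mul1r //; lra.
  have ca : 0 <= (1 - c) * (1 + a) by apply: mulr_ge0; lra.
  rewrite ler_norml; apply/andP; split; nra.
rewrite normrM ger0_norm ?divr_ge0 ?mulr_ge0 //; try lra.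
rewrite mulrC ler_wpM2l //.
by rewrite ler_pdivrMr ?mulr_gt0 // mulrC ler_pdivlMr //; nra.
Qed.

Lemma contraction_cvg0 (R : archiRealFieldType) (e d : nat -> R) (q : R) :
  0 <= q < 1 -> (forall k, 0 <= e k) ->
  (forall k, e k.+1 <= q * e k + d k) -> d @ \oo --> 0 -> e @ \oo --> 0.
Proof.
move=> /andP[q0 q1] e0 e_rec d0; apply/cvgr0Pnorm_le => eps eps0.
have del0 : 0 < eps * (1 - q) / 2 by rewrite divr_gt0 ?mulr_gt0 //; lra.
have /cvgr0Pnorm_le/(_ _ del0) [N _ dN] := d0.
have e_iter m : e (m + N)%N <= q ^+ m * e N + eps / 2.
  elim: m => [|m IH]; first by rewrite expr0 mul1r; lra.
  have dmN := le_trans (ler_norm _) (dN (m + N)%N (leq_addl _ _)).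
  have := ler_wpM2l q0 IH; rewrite addSn exprS -mulrA; move: (e_rec (m + N)%N).
  lra.
have geo : (fun m => q ^+ m * e N) @ \oo --> 0.
  by rewrite -(mul0r (e N)); apply: cvgMl; apply: cvg_expr; rewrite ger0_norm.
have /cvgr0Pnorm_le/(_ (eps / 2)) [|M _ geoM] := geo; first lra.
exists (M + N)%N => // k /= MNk.
have Nk : (N <= k)%N by apply: leq_trans MNk; rewrite leq_addl.
rewrite ger0_norm // -(subnK Nk).
have MkN : (M <= k - N)%N by rewrite leq_subRL // addnC.
have := le_trans (ler_norm _) (geoM _ MkN).
move: (e_iter (k - N)%N); lra.
Qed.

Lemma growth_iterate_cvg (R : realType) (a : R) (c b : nat -> R) :
  0 < a -> (forall k, 0 <= c k <= 1) -> c @ \oo --> (1 : R) -> 0 <= b 0%N ->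
  (forall k, b k.+1 = growth_step a (c k) (b k)) ->
  b @ \oo --> growth_fixpoint a.
Proof.
move=> a0 c01 c1 b00 bS.
have c0 k : 0 <= c k by have /andP[] := c01 k.
have b_ge k : a <= b k.+1.
  by elim: k => [|k IH]; rewrite bS growth_step_ge //; lra.
set s := growth_fixpoint a.
have q01 : 0 <= (1 + a)^-1 < 1.
  by rewrite invr_ge0 invf_lt1 ?ltrDl ?andbT; lra.
have e_rec k : `|b k.+2 - s| <= (1 + a)^-1 * `|b k.+1 - s| + (1 - c k.+1) * (1 + a).
  rewrite [b k.+2]bS mulrC [leRHS]addrC.
  exact: growth_step_dist_le (ltW a0) (c01 _) (b_ge _) (growth_fixpoint_ge _)
    (growth_fixpointP (ltW a0)).
have d0 : (fun k => (1 - c k.+1) * (1 + a)) @ \oo --> 0.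
  rewrite -(mul0r (1 + a)) -(subrr 1); apply: cvgMl; apply: cvgB; first exact: cvg_cst.
  by rewrite cvg_shiftS.
have := contraction_cvg0 q01 (fun k => normr_ge0 _) e_rec d0.
by move/norm_cvg0/subr_cvg0; rewrite cvg_shiftS.
Qed.

Lemma bgrowthS (R : realType) (alpha li : R) (beta gamma : nat -> R) (k : nat) :
  gamma k.+1 = beta k.+1 ->
  bgrowth alpha li beta gamma k.+1 =
    growth_step (alpha * `|li|) (beta k.+1) (bgrowth alpha li beta gamma k).
Proof. by move=> /= ->. Qed.

Theorem corollary4p3 (R : realType) (n p : nat) (lam : nat -> R) (alpha : R)
    (gamma beta : nat -> R) :
  (1 <= p)%N -> (p < n)%N ->
  (* eigenvalues lam 1, ..., lam n of H = diag(lam 1, ..., lam n), nonincreasing *)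
  (forall i j : nat, (1 <= i)%N -> (i <= j)%N -> (j <= n)%N -> lam j <= lam i) ->
  (forall i : nat, (1 <= i)%N -> (i <= n - p)%N -> 0 <= lam i) ->
  (forall i : nat, (n - p < i)%N -> (i <= n)%N -> lam i < 0) ->
  0 < alpha -> alpha < 1 / Num.max (lam 1%N) (- lam n) ->
  (forall k : nat, (1 <= k)%N -> gamma k <= gamma k.+1) ->
  (forall k : nat, (1 <= k)%N -> beta k <= beta k.+1) ->
  (forall k : nat, (1 <= k)%N -> 0 <= gamma k <= 1) ->
  (forall k : nat, (1 <= k)%N -> 0 <= beta k <= 1) ->
  (forall k : nat, (1 <= k)%N -> gamma k = beta k) ->
  gamma @ \oo --> (1 : R) ->
  beta @ \oo --> (1 : R) ->
  forall i : nat, (1 <= i)%N -> (i <= n)%N -> lam i < 0 ->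
    bgrowth alpha (lam i) beta gamma @ \oo -->
      alpha * `|lam i| + Num.sqrt (alpha * `|lam i|) * Num.sqrt (1 + alpha * `|lam i|).
Proof.
move=> _ _ _ _ _ alpha0 _ _ _ _ beta01 gamma_beta _ beta1 i _ _ lam_i0.
apply: (growth_iterate_cvg (c := fun k => beta k.+1)) => //.
- by rewrite mulr_gt0 // normr_gt0 ltr0_neq0.
- by move=> k; apply: beta01.
- by rewrite cvg_shiftS.
- by move=> k; apply: bgrowthS; apply: gamma_beta.
Qed.
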